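(* Consider the class of three-valued logics (as defined in the context) that are paraconsistent and have properties (a) and (b). There are exactly 32 logics in this class whose logical equivalence relation $\equiv$ satisfies, for all formulas $A,B$, all of the following: (1) $A\wedge\bot \equiv \bot$; (2) $A\vee\top\equiv\top$; (3) $A\wedge\top\equiv A$; (4) $A\vee\bot\equiv A$; (5) $A\wedge A\equiv A$; (6) $A\vee A\equiv A$; (7) $A\wedge B\equiv B\wedge A$; (8) $A\vee B\equiv B\vee A$.
   Context: Formulas are built from a countably infinite set of propositional variables, the constant $\bot$, the unary connective $\neg$ and the binary connectives $\wedge,\vee,\to$; $\top$ abbreviates $\neg\bot$. Let $V=\{t,f,b\}$. A three-valued logic is specified by truth functions $\neg^M:V\to V$ and $\wedge^M,\vee^M,\to^M:V^2\to V$ that agree with the classical truth functions of negation, conjunction, disjunction and material implication on $\{t,f\}$, with $\bot$ interpreted as $f$; two logics are different iff at least one of these truth functions differs. A valuation is a map $\nu$ from formulas to $V$ with $\nu(\bot)=f$, $\nu(\neg A)=\neg^M(\nu(A))$, $\nu(A\wedge B)=\wedge^M(\nu(A),\nu(B))$, and similarly for $\vee,\to$ (values on propositional variables are arbitrary). The designated values are $t$ and $b$: $\Gamma\models A$ iff for every valuation $\nu$, either $\nu(A')=f$ for some $A'\in\Gamma$ or $\nu(A)\in\{t,b\}$. The logic is paraconsistent if there are formulas $A,B$ with $\{A,\neg A\}\not\models B$. Its logical equivalence relation is: $A\equiv B$ iff $\nu(A)=\nu(B)$ for every valuation $\nu$. Property (a): for every set of formulas $\Gamma$ and formula $A$, $\Gamma\models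 A$ implies $\Gamma\models_{\mathrm{CPL}}A$, where $\models_{\mathrm{CPL}}$ is the consequence relation of classical propositional logic (with $\bot$ false, $\to$ material implication). Property (b): for all sets $\Gamma$ and formulas $A,B,C$: (b1) $\Gamma\cup\{A\}\models B$ iff $\Gamma\models A\to B$; (b2) $\Gamma\models A\wedge B$ iff $\Gamma\models A$ and $\Gamma\models B$; (b3) $\Gamma\cup\{A\vee B\}\models C$ iff $\Gamma\cup\{A\}\models C$ and $\Gamma\cup\{B\}\models C$. *)

From HB Require Import structures.
From mathcomp Require Import all_boot.
Set Implicit Arguments. Unset Strict Implicit. Unset Printing Implicit Defensive.

Inductive V := vt | vf | vb.

Definition V_code (x : V) : 'I_3 :=
  match x with vt => inord 0 | vf => inord 1 | vb => inord 2 end.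
Definition V_decode (i : 'I_3) : V :=
  match val i with 0 => vt | 1 => vf | _ => vb end.
Lemma V_codeK : cancel V_code V_decode.
Proof. by case; rewrite /V_decode /= inordK. Qed.
HB.instance Definition _ := Finite.copy V (can_type V_codeK).

Inductive form :=
| Var of nat
| Bot
| Neg of form
| And of form & form
| Or  of form & form
| Imp of form & form.

Definition Top : form := Neg Bot.

(* A three-valued logic: truth functions for neg, and, or, imp
   (two logics are equal iff all four truth functions coincide). *)
Definition logic : finType :=
  ({ffun V -> V} * {ffun V * V -> V} * {ffun V * V -> V} * {ffun V * V -> V})%type.

Definition negM (L : logic) := L.1.1.1.
Definition andM (L : logic) := L.1.1.2.
Definition orM  (L : logic) := L.1.2.
Definition impM (L : logic) := L.2.

Definition classical_on_tf (L : logic) : Prop :=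
  [/\ negM L vt = vf, negM L vf = vt,
      [/\ andM L (vt, vt) = vt, andM L (vt, vf) = vf,
          andM L (vf, vt) = vf & andM L (vf, vf) = vf],
      [/\ orM L (vt, vt) = vt, orM L (vt, vf) = vt,
          orM L (vf, vt) = vt & orM L (vf, vf) = vf] &
      [/\ impM L (vt, vt) = vt, impM L (vt, vf) = vf,
          impM L (vf, vt) = vt & impM L (vf, vf) = vt]].

Definition valuation (L : logic) (nu : form -> V) : Prop :=
  [/\ nu Bot = vf,
      forall A, nu (Neg A) = negM L (nu A),
      forall A B, nu (And A B) = andM L (nu A, nu B),
      forall A B, nu (Or A B) = orM L (nu A, nu B) &
      forall A B, nu (Imp A B) = impM L (nu A, nu B)].

Definition designated (x : V) : Prop := x = vt \/ x = vb.

Definition cons (L : logic) (G : form -> Prop) (A : form) : Prop :=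
  forall nu, valuation L nu ->
    (exists A', G A' /\ nu A' = vf) \/ designated (nu A).

Definition paraconsistent (L : logic) : Prop :=
  exists A B, ~ cons L (fun C => C = A \/ C = Neg A) B.

Definition cvaluation (w : form -> bool) : Prop :=
  [/\ w Bot = false,
      forall A, w (Neg A) = ~~ w A,
      forall A B, w (And A B) = w A && w B,
      forall A B, w (Or A B) = w A || w B &
      forall A B, w (Imp A B) = w A ==> w B].

Definition cpl_cons (G : form -> Prop) (A : form) : Prop :=
  forall w, cvaluation w -> (forall A', G A' -> w A' = true) -> w A = true.

Definition setU1 (G : form -> Prop) (A : form) : form -> Prop :=
  fun C => G C \/ C = A.

Definition property_a (L : logic) : Prop :=
  forall G A, cons L G A -> cpl_cons G A.

Definition property_b (L : logic) : Prop :=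
  [/\ forall G A B, cons L (setU1 G A) B <-> cons L G (Imp A B),
      forall G A B, cons L G (And A B) <-> cons L G A /\ cons L G B &
      forall G A B C, cons L (setU1 G (Or A B)) C <->
                      cons L (setU1 G A) C /\ cons L (setU1 G B) C].

Definition equiv (L : logic) (A B : form) : Prop :=
  forall nu, valuation L nu -> nu A = nu B.

Definition lattice_laws (L : logic) : Prop :=
  forall A B,
  [/\ equiv L (And A Bot) Bot, equiv L (Or A Top) Top,
      equiv L (And A Top) A, equiv L (Or A Bot) A &
      [/\ equiv L (And A A) A, equiv L (Or A A) A,
          equiv L (And A B) (And B A) & equiv L (Or A B) (Or B A)]].

Definition in_class (L : logic) : Prop :=
  [/\ classical_on_tf L, paraconsistent L, property_a L, property_b L
    & lattice_laws L].

From Pilot Require Import Defs.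
From mathcomp Require Import all_boot.
Set Implicit Arguments. Unset Strict Implicit. Unset Printing Implicit Defensive.

(* Consequence only sees designation (t, b designated, f not). Property (a)
   is automatic once the tables are classical on {t, f}, because a classical
   valuation is a three-valued one. Paraconsistency says exactly ~b <> f.
   The lattice laws say that /\ and \/ are commutative idempotent operations
   with f (resp. t) absorbing and t (resp. f) neutral, and on three values
   there is only one such operation, the strong Kleene table. Property (b)
   follows when designation is a homomorphism onto the two-element Boolean
   algebra for /\, \/ and ->, and the deduction theorem (b1) forces this for
   ->. Hence -> is classical on {t, f}, b -> f = f, and the entries f -> b,
   t -> b, b -> t, b -> b are free in {t, b}; with ~b in {t, b} this gives
   2^5 = 32 logics. *)

Definition designatedb (x : V) : bool := if x is vf then false else true.

Lemma designatedP x : reflect (designated x) (designatedb x).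
Proof. by case: x; constructor; [left | case | right]. Qed.

Lemma designatedbN x : ~~ designatedb x -> x = vf.
Proof. by case: x. Qed.

Fixpoint eval (L : logic) (m : nat -> V) (A : form) : V :=
  match A with
  | Var n => m n
  | Bot => vf
  | Neg A => negM L (eval L m A)
  | And A B => andM L (eval L m A, eval L m B)
  | Or A B => orM L (eval L m A, eval L m B)
  | Imp A B => impM L (eval L m A, eval L m B)
  end.

Lemma eval_valuation L m : valuation L (eval L m).
Proof. by []. Qed.

Definition assign2 (x y : V) (k : nat) : V := if k is 0 then x else y.

Local Notation p := (Var 0).
Local Notation q := (Var 1).

Lemma consP L G A :
  Defs.cons L G A <->
  forall nu, valuation L nu -> (exists A', G A' /\ nu A' = vf) \/ designatedb (nu A).
Proof.
by split=> H nu nuL; (case: (H nu nuL) => [|/designatedP]; [left | right]).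
Qed.

Lemma cons_mem L G A : G A -> Defs.cons L G A.
Proof.
move=> GA; apply/consP => nu _.
by case nuA: (nu A); [right | left; exists A | right].
Qed.

Lemma cons_eval L G A m :
  Defs.cons L G A -> (forall C, G C -> designatedb (eval L m C)) ->
  designatedb (eval L m A).
Proof.
move=> /consP /(_ _ (eval_valuation L m)) [[C [GC C_f]]|//] hG.
by have := hG C GC; rewrite C_f.
Qed.

Lemma property_a_of_classical L : classical_on_tf L -> property_a L.
Proof.
case=> ? ? [? ? ? ?] [? ? ? ?] [? ? ? ?] G A GA w wC wG.
have [wB wN wA wO wI] := wC.
pose nu X := if w X then vt else vf.
have nuL : valuation L nu.
  split; rewrite /nu ?wB // => X; rewrite ?wN; [by case: (w X)|..] => Y;
  by rewrite ?wA ?wO ?wI; case: (w X); case: (w Y).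
case: (GA nu nuL) => [[A' [GA' nuA']]|]; first by move: nuA'; rewrite /nu wG.
by rewrite /nu /designated; case: (w A) => // -[].
Qed.

Lemma paraconsistentE L :
  negM L vt = vf -> paraconsistent L <-> negM L vb <> vf.
Proof.
move=> nt; split=> [[A [B nAB]] nb | nb].
  apply: nAB => nu [_ nuN _ _ _]; left.
  case nuA: (nu A); [exists (Neg A) | exists A | exists (Neg A)];
    by rewrite ?nuN nuA; split; [first [by right | by left] |].
exists p, q => /(cons_eval (m := assign2 vb vf)) des_q.
suff: designatedb vf by [].
by apply: des_q => C [] -> /=; case: (negM L vb) nb.
Qed.

Lemma designated_imp_of_property_b L :
  property_b L ->
  forall x y, designatedb (impM L (x, y)) = designatedb x ==> designatedb y.
Proof.
case=> ded _ _ x y; apply/idP/implyP => [des_xy des_x | des_xy].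
  have /ded/(cons_eval (m := assign2 x y)) :
      Defs.cons L (eq^~ (Imp p q)) (Imp p q) by exact: cons_mem.
  by apply=> C [->|->].
have [des_x | /designatedbN x_f] := boolP (designatedb x).
  have /ded/(cons_eval (m := assign2 x y)) :
      Defs.cons L (setU1 (eq^~ q) p) q by apply: cons_mem; left.
  by apply=> C ->; exact: des_xy.
have /ded/(cons_eval (m := assign2 x y)) :
    Defs.cons L (setU1 (fun=> False) Bot) q.
  by apply/consP => nu [nuB _ _ _ _]; left; exists Bot; split; [right|].
by rewrite /= -x_f; apply.
Qed.

Lemma deduction_of_designated_imp L :
  (forall x y, designatedb (impM L (x, y)) = designatedb x ==> designatedb y) ->
  forall G A B, Defs.cons L (setU1 G A) B <-> Defs.cons L G (Imp A B).
Proof.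
move=> himp G A B.
split=> /consP H; apply/consP=> nu nuL; have [_ _ _ _ nuI] := nuL.
  rewrite nuI himp; case: (H nu nuL) => [[C [[GC|->] C_f]]|des_B].
  - by left; exists C.
  - by right; rewrite C_f.
  - by right; rewrite des_B implybT.
case: (H nu nuL) => [[C [GC C_f]]|]; first by left; exists C; split=> //; left.
rewrite nuI himp; case des_A: (designatedb (nu A)) => /= des_B; first by right.
by left; exists A; split; [right | exact/designatedbN/negbT].
Qed.

Lemma conj_of_designated_and L :
  (forall x y, designatedb (andM L (x, y)) = designatedb x && designatedb y) ->
  forall G A B, Defs.cons L G (And A B) <-> Defs.cons L G A /\ Defs.cons L G B.
Proof.
move=> hand G A B; split=> [/consP H | [/consP HA /consP HB]].
  by split; apply/consP=> nu nuL; have [_ _ nuA _ _] := nuL;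
    (case: (H nu nuL); [left | rewrite nuA hand => /andP[]; right]).
apply/consP => nu nuL; have [_ _ nuA _ _] := nuL.
case: (HA nu nuL) => [|des_A]; first by left.
case: (HB nu nuL) => [|des_B]; first by left.
by right; rewrite nuA hand des_A des_B.
Qed.

Lemma disj_of_designated_or L :
  (forall x y, designatedb (orM L (x, y)) = designatedb x || designatedb y) ->
  forall G A B C, Defs.cons L (setU1 G (Or A B)) C <->
                  Defs.cons L (setU1 G A) C /\ Defs.cons L (setU1 G B) C.
Proof.
move=> hor G A B C; split=> [/consP H | [/consP HA /consP HB]].
  split; apply/consP=> nu nuL; have [_ _ _ nuO _] := nuL;
    case: (H nu nuL) => [[D [[GD|->] D_f]]|];
    try by [left; exists D; split=> //; left | right];
    move/(congr1 designatedb): D_f; rewrite nuO hor;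
    move=> /norP[/designatedbN ? /designatedbN ?];
    by left; eexists; split; [right; reflexivity |].
apply/consP=> nu nuL; have [_ _ _ nuO _] := nuL.
case: (HA nu nuL) => [[D [[GD|->] A_f]]|];
  [by left; exists D; split=> //; left | | by right].
case: (HB nu nuL) => [[E [[GE|->] B_f]]|];
  [by left; exists E; split=> //; left | | by right].
left; exists (Or A B); split; first by right.
by apply: designatedbN; rewrite nuO hor A_f B_f.
Qed.

(* For (a, e) = (f, t) this is strong Kleene conjunction, for (t, f)
   disjunction. *)
Definition absorb_op (a e : V) : {ffun V * V -> V} :=
  [ffun xy => if (xy.1 == a) || (xy.2 == a) then a
              else if xy.1 == e then xy.2 else xy.1].

Definition absorb_laws (a e : V) (op : V * V -> V) : Prop :=
  [/\ forall x, op (x, a) = a, forall x, op (x, e) = x,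
      forall x, op (x, x) = x & forall x y, op (x, y) = op (y, x)].

Lemma eq_third_value (a e x y : V) :
  a <> e -> x <> a -> x <> e -> y <> a -> y <> e -> x = y.
Proof. by case: a; case: e; case: x; case: y. Qed.

Section AbsorbOp.

Variables a e : V.
Hypothesis a_neq_e : a <> e.

Lemma absorb_op_laws : absorb_laws a e (absorb_op a e).
Proof.
have e_a : (e == a) = false by apply/eqP => /esym.
split=> [x | x | x | x y]; rewrite !ffunE /=.
- by rewrite eqxx orbT.
- rewrite e_a orbF; have [->|_] := eqVneq x a => //.
  by have [->|] := eqVneq x e.
- rewrite orbb; have [->|_] := eqVneq x a => //.
  by case: (x == e).
rewrite orbC; case: ifP => // /norP[y_a x_a].
case: ifP => [/eqP-> | /negbT x_e]; case: ifP => [/eqP | /negbT y_e] //.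
by apply: (@eq_third_value a e) => //; apply/eqP.
Qed.

Lemma absorb_laws_unique op op' :
  absorb_laws a e op -> absorb_laws a e op' -> op =1 op'.
Proof.
move=> [opa ope opx opC] [opa' ope' opx' opC'] [x y].
have [-> | x_a] := eqVneq x a; first by rewrite opC opa opC' opa'.
have [-> | y_a] := eqVneq y a; first by rewrite opa opa'.
have [-> | x_e] := eqVneq x e; first by rewrite opC ope opC' ope'.
have [-> | y_e] := eqVneq y e; first by rewrite ope ope'.
by rewrite (@eq_third_value a e x y) ?opx ?opx' //; apply/eqP.
Qed.

Lemma absorb_lawsE (op : {ffun V * V -> V}) :
  absorb_laws a e op <-> op = absorb_op a e.
Proof.
split=> [op_laws | ->]; last exact: absorb_op_laws.
by apply/ffunP/absorb_laws_unique/absorb_op_laws.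
Qed.

End AbsorbOp.

Lemma lattice_laws_absorb L :
  negM L vf = vt ->
  lattice_laws L <-> absorb_laws vf vt (andM L) /\ absorb_laws vt vf (orM L).
Proof.
move=> nf; split=> [lat | [[fa ft fx fC] [ta tf tx tC]] A B].
  have [and_bot or_top and_top or_bot [and_id or_id and_C or_C]] := lat p q.
  have ev A B (AB : Defs.equiv L A B) x y :
      eval L (assign2 x y) A = eval L (assign2 x y) B.
    exact: AB _ (eval_valuation L _).
  split; split=> [x | x | x | x y].
  - exact: (ev _ _ and_bot x x).
  - by have := ev _ _ and_top x x; rewrite /= nf.
  - exact: (ev _ _ and_id x x).
  - exact: (ev _ _ and_C x y).
  - by have := ev _ _ or_top x x; rewrite /= nf.
  - exact: (ev _ _ or_bot x x).
  - exact: (ev _ _ or_id x x).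
  - exact: (ev _ _ or_C x y).
split; [| | | | split]; move=> nu [nuB nuN nuA nuO _];
  rewrite /Top ?nuA ?nuO ?nuN ?nuB ?nf ?fa ?ft ?fx ?ta ?tf ?tx //.
Qed.

Lemma designatedb_meet x y :
  designatedb (absorb_op vf vt (x, y)) = designatedb x && designatedb y.
Proof.
have [fa ft fx fC] : absorb_laws vf vt (absorb_op vf vt) by exact: absorb_op_laws.
by case: x; case: y; rewrite ?fa ?ft ?fx // fC ?fa ?ft.
Qed.

Lemma designatedb_join x y :
  designatedb (absorb_op vt vf (x, y)) = designatedb x || designatedb y.
Proof.
have [ta tf tx tC] : absorb_laws vt vf (absorb_op vt vf) by exact: absorb_op_laws.
by case: x; case: y; rewrite ?ta ?tf ?tx // tC ?ta ?tf.
Qed.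

Lemma in_classE L :
  in_class L <->
  [/\ classical_on_tf L, negM L vb <> vf,
      andM L = absorb_op vf vt, orM L = absorb_op vt vf &
      forall x y, designatedb (impM L (x, y)) = designatedb x ==> designatedb y].
Proof.
split=> [[cl par _ pb lat] | [cl nb hand hor himp]]; have [nt nf _ _ _] := cl.
  have [/absorb_lawsE-> // /absorb_lawsE-> //] := (lattice_laws_absorb nf).1 lat.
  by split=> //; [exact/(paraconsistentE nt) | exact: designated_imp_of_property_b].
split=> //; [exact/(paraconsistentE nt) | exact: property_a_of_classical | |].
  split; first exact: deduction_of_designated_imp.
    by apply: conj_of_designated_and => x y; rewrite hand designatedb_meet.
  by apply: disj_of_designated_or => x y; rewrite hor designatedb_join.
apply/(lattice_laws_absorb nf); rewrite hand hor.
by split; apply: absorb_op_laws.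
Qed.

Definition tb_of_bool (b : bool) : V := if b then vt else vb.

Definition neg_table (n : bool) : {ffun V -> V} :=
  [ffun x => match x with vt => vf | vf => vt | vb => tb_of_bool n end].

Definition imp_table (i1 i2 i3 i4 : bool) : {ffun V * V -> V} :=
  [ffun xy => match xy with
   | (vf, vb) => tb_of_bool i1 | (vt, vb) => tb_of_bool i2
   | (vb, vt) => tb_of_bool i3 | (vb, vb) => tb_of_bool i4
   | (vt, vf) | (vb, vf) => vf | _ => vt end].

Definition params := (bool * bool * bool * bool * bool)%type.

Definition logic_of (c : params) : logic :=
  let: (n, i1, i2, i3, i4) := c in
  (neg_table n, absorb_op vf vt, absorb_op vt vf, imp_table i1 i2 i3 i4).

(* A logic of the class is determined by ~b and the four free entries of ->,
   each of which is t or b. *)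
Definition params_of (L : logic) : params :=
  (negM L vb == vt, impM L (vf, vb) == vt, impM L (vt, vb) == vt,
   impM L (vb, vt) == vt, impM L (vb, vb) == vt).

Lemma eq_tb_of_bool_vt b : (tb_of_bool b == vt) = b.
Proof. by case: b; [rewrite eqxx | apply/eqP]. Qed.

Lemma tb_of_bool_eq_vt x : designatedb x -> tb_of_bool (x == vt) = x.
Proof. by case: x => // _; rewrite ?eqxx // (eq_tb_of_bool_vt false). Qed.

Lemma logic_ofK : cancel logic_of params_of.
Proof.
by case=> [[[[n i1] i2] i3] i4]; rewrite /params_of /= !ffunE /= !eq_tb_of_bool_vt.
Qed.

Lemma logic_of_in_class c : in_class (logic_of c).
Proof.
case: c => [[[[n i1] i2] i3] i4]; apply/in_classE.
have [fa ft fx _] : absorb_laws vf vt (absorb_op vf vt) by exact: absorb_op_laws.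
have [ta tf tx _] : absorb_laws vt vf (absorb_op vt vf) by exact: absorb_op_laws.
rewrite /classical_on_tf /negM /andM /orM /impM /=.
split=> [||||x y].
- by split; try split; rewrite ?fa ?ft ?fx ?ta ?tf ?tx ?ffunE.
- by rewrite ffunE; case: n.
- by [].
- by [].
by case: x; case: y; rewrite ffunE //=; case: i1; case: i2; case: i3; case: i4.
Qed.

Lemma in_class_logic_of L : in_class L -> L = logic_of (params_of L).
Proof.
move=> /in_classE; case: L => [[[ng an] or] im]; rewrite /negM /andM /orM /impM /=.
move=> [[nt nf _ _ [itt itf ift iff]] nb -> -> himp].
congr (_, _, _, _); apply/ffunP.
  by case; rewrite ffunE // tb_of_bool_eq_vt //; case: (ng vb) nb.
case=> -[] []; rewrite ffunE //= ?tb_of_bool_eq_vt ?himp //.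
by apply: designatedbN; rewrite himp.
Qed.

Theorem corollary2 :
  exists s : seq logic,
    [/\ uniq s, size s = 32 & forall L : logic, in_class L <-> L \in s].
Proof.
exists (map logic_of (enum {: params})); split.
- by rewrite map_inj_uniq ?enum_uniq //; apply: can_inj logic_ofK.
- by rewrite size_map -cardE !card_prod card_bool.
move=> L; split=> [/in_class_logic_of -> | /mapP[c _ ->]].
  by rewrite map_f ?mem_enum.
exact: logic_of_in_class.
Qed.
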